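(* Let $a,b,x\ge 0$ be integers and let $(p_m)_{m\ge 2}$ be numbers in $[0,1]$. Suppose the transition probabilities of the constrained walk satisfy $p(r,s)=p_{r+s}$ for all integers $r,s>0$. Then $B(a,b,x)$ equals the probability that an unconstrained walker starting at $(a,b+x+1)$ and taking $a+b+x$ steps ends at one of the $x+1$ points $(-t,1+t)$, $0\le t\le x$, where the unconstrained walker, from any lattice point $(r,s)$ with $r+s\ge 2$, independently moves West (to $(r-1,s)$) with probability $p_{r+s}$ and South (to $(r,s-1)$) with probability $1-p_{r+s}$.
   Context: Constrained walks: let $p(r,s)\in[0,1]$ be given for all integers $r,s>0$. A walker at a lattice point $(r,s)$ with $r,s>0$ moves West to $(r-1,s)$ with probability $p(r,s)$ and South to $(r,s-1)$ with probability $1-p(r,s)$, independently of the past; a walker at a point $(r,0)$ with $r>0$ always moves West, and a walker at $(0,s)$ with $s>0$ always moves South, until the origin is reached. Two walkers $U$ and $L$ start at $(a,b+x+1)$ and $(a+x+1,b)$ respectively and move simultaneously and independently, one step per time unit (both start on the line $X+Y=a+b+x+1$, so at each time they lie on a common antidiagonal). $B(a,b,x)$ is the probability that the first time the two walkers occupy the same lattice point is when they both reach the origin. *)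

From HB Require Import structures.
From mathcomp Require Import all_boot all_order all_algebra.
Set Implicit Arguments. Unset Strict Implicit. Unset Printing Implicit Defensive.
Import Order.TTheory GRing.Theory Num.Theory.
Local Open Scope ring_scope.

Section Walks.
Variable R : realFieldType.

(* Probability that the constrained walker at (r,s) steps West:
   p(r,s) if r,s>0; 1 on the positive X-axis (s = 0, r > 0);
   0 on the positive Y-axis (r = 0, s > 0) (it then steps South).
   (At the origin the walker has stopped; the value is irrelevant.) *)
Definition west_prob (p : nat -> nat -> R) (r s : nat) : R :=
  if r == 0%N then 0 else if s == 0%N then 1 else p r s.

(* meet_origin p k r1 s1 r2 s2 : probability that two independent constrained
   walkers, currently at (r1,s1) and (r2,s2) and moving simultaneously, first
   occupy a common lattice point at the origin (k = fuel, number of steps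
   allowed; for walkers on the antidiagonal X+Y=k, k steps bring both to the
   origin). *)
Fixpoint meet_origin (p : nat -> nat -> R) (k r1 s1 r2 s2 : nat) : R :=
  if (r1 == r2) && (s1 == s2) then ((r1 == 0%N) && (s1 == 0%N))%:R
  else match k with
  | 0 => 0
  | k'.+1 =>
      let w1 := west_prob p r1 s1 in
      let w2 := west_prob p r2 s2 in
      w1 * w2 * meet_origin p k' r1.-1 s1 r2.-1 s2
      + w1 * (1 - w2) * meet_origin p k' r1.-1 s1 r2 s2.-1
      + (1 - w1) * w2 * meet_origin p k' r1 s1.-1 r2.-1 s2
      + (1 - w1) * (1 - w2) * meet_origin p k' r1 s1.-1 r2 s2.-1
  end.

Definition Bprob (p : nat -> nat -> R) (a b x : nat) : R :=
  meet_origin p (a + b + x + 1) a (b + x + 1) (a + x + 1) b.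

Fixpoint free_prob (pm : nat -> R) (k : nat) (r s : int) (T : pred (int * int)) : R :=
  match k with
  | 0 => (T (r, s))%:R
  | k'.+1 =>
      pm (absz (r + s)) * free_prob pm k' (r - 1) s T
      + (1 - pm (absz (r + s))) * free_prob pm k' r (s - 1) T
  end.

End Walks.

Definition end_points (x : nat) : pred (int * int) :=
  fun z => [exists t : 'I_x.+1, z == (- (t : nat)%:Z, 1 + (t : nat)%:Z)%R].

(* Because p(r,s) depends only on the level r+s, and both walkers always share
   a level, the West-probability at each time is the same for both walkers
   (away from the axes), so each X-coordinate follows one chain driven by the
   levels.  Let Q_k(c) be the probability that this free chain, started at c on
   level k+1, ends at a positive value on level 1.  The constrained walker's
   chain has the same one-step averages of Q, since Q vanishes for c <= 0 and
   equals 1 for c >= k+1.  Hence Q_k(l) - Q_k(u) satisfies the recursion and the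
   boundary values of the meeting probability of walkers with X-coordinates
   u <= l (the usual reflection argument), so B(a,b,x) = Q(a+x+1) - Q(a).  On
   the other side, ending at one of the points (-t,1+t), 0 <= t <= x, means
   ending with X-coordinate in [-x,0], whose probability is, by translation
   invariance, Q(a+x+1) - Q(a) as well. *)
From mathcomp Require Import all_boot all_order all_algebra.
From mathcomp Require Import zify ring.
Set Implicit Arguments.
Import Order.TTheory GRing.Theory Num.Theory.
Local Open Scope ring_scope.

Section FreeWalk.
Variable R : realFieldType.
Variable pm : nat -> R.

(* [ends_right k c] is Q_k(c): the X-coordinate starts at c on level k+1 and
   moves West with probability pm at the current level. *)
Fixpoint ends_right (k : nat) (c : int) : R :=
  match k with
  | 0 => ((0 < c)%R)%:R
  | k'.+1 => pm k.+1 * ends_right k' (c - 1) + (1 - pm k.+1) * ends_right k' c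
  end.

Lemma ends_right_le0 k c : c <= 0 -> ends_right k c = 0.
Proof.
elim: k c => [|k IH] c c_le0 /=; first by rewrite ltNge c_le0.
by rewrite !IH ?mulr0 ?addr0 //; lia.
Qed.

Lemma ends_right_ge k c : k.+1%:Z <= c -> ends_right k c = 1.
Proof.
elim: k c => [|k IH] c c_ge /=; first by have -> : 0 < c by lia.
by rewrite !IH; [ring | lia | lia].
Qed.

Lemma end_points_level1 x (r s : int) : r + s = 1 ->
  (end_points x (r, s))%:R = ((0 < r + x%:Z + 1)%R)%:R - ((0 < r)%R)%:R :> R.
Proof.
move=> rs1; rewrite /end_points.
case: existsP => [[t /eqP [-> _]] | no_t].
  have t_le : (t <= x)%N by rewrite -ltnS.
  have -> : 0 < - (t : nat)%:Z + x%:Z + 1 by lia.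
  have -> : (0 < - (t : nat)%:Z) = false by lia.
  by rewrite subr0.
have [r_gt0 | r_le0] := ltrP 0 r.
  have -> : 0 < r + x%:Z + 1 by lia.
  by rewrite subrr.
have [r_ge | r_lt] := lerP (- x%:Z) r; last first.
  have -> : (0 < r + x%:Z + 1) = false by lia.
  by rewrite subrr.
have t_lt : (absz r < x.+1)%N by lia.
by case: no_t; exists (Ordinal t_lt); apply/eqP; congr pair => /=; lia.
Qed.

Lemma free_prob_end_points x k (r s : int) : r + s = k.+1%:Z ->
  free_prob pm k r s (end_points x) = ends_right k (r + x%:Z + 1) - ends_right k r.
Proof.
elim: k r s => [|k IH] r s rs_k; first by rewrite /= end_points_level1.
rewrite /= rs_k /= (IH (r - 1) s) ?(IH r (s - 1)); try lia.
by rewrite (_ : r - 1 + x%:Z + 1 = r + x%:Z + 1 - 1); ring.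
Qed.

End FreeWalk.

Arguments ends_right {R} pm k c.

Section ConstrainedWalks.
Variable R : realFieldType.
Variables (p : nat -> nat -> R) (pm : nat -> R).
Hypothesis p_level : forall r s : nat, (0 < r)%N -> (0 < s)%N -> p r s = pm (r + s)%N.

Lemma meet_originS k r1 s1 r2 s2 : (r1, s1) != (r2, s2) ->
  meet_origin p k.+1 r1 s1 r2 s2 =
      west_prob p r1 s1 * west_prob p r2 s2 * meet_origin p k r1.-1 s1 r2.-1 s2
      + west_prob p r1 s1 * (1 - west_prob p r2 s2) * meet_origin p k r1.-1 s1 r2 s2.-1
      + (1 - west_prob p r1 s1) * west_prob p r2 s2 * meet_origin p k r1 s1.-1 r2.-1 s2
      + (1 - west_prob p r1 s1) * (1 - west_prob p r2 s2) * meet_origin p k r1 s1.-1 r2 s2.-1.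
Proof. by rewrite xpair_eqE => /negbTE /= ->. Qed.

Lemma meet_origin_coincide k r s : (0 < r + s)%N -> meet_origin p k r s r s = 0.
Proof.
move=> rs_gt0; have not_origin : (r == 0%N) && (s == 0%N) = false by lia.
by case: k => [|k] /=; rewrite !eqxx /= not_origin.
Qed.

Lemma mul_west_probE r s (M v : R) :
  ((0 < r)%N -> M = v) -> west_prob p r s * M = west_prob p r s * v.
Proof. by case: r => [|r] eq_Mv; rewrite ?mul0r ?eq_Mv. Qed.

Lemma mul_south_probE r s (M v : R) : (0 < r + s)%N ->
  ((0 < s)%N -> M = v) -> (1 - west_prob p r s) * M = (1 - west_prob p r s) * v.
Proof.
case: s => [|s] rs_gt0 eq_Mv; last by rewrite eq_Mv.
by case: r rs_gt0 => // r _; rewrite /west_prob /= subrr !mul0r.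
Qed.

(* The constrained X-coordinate averages Q like the free one: on the axes the
   forced move lands where Q is constant anyway. *)
Lemma ends_right_west_prob {k u s} : (u + s = k.+2)%N ->
  ends_right pm k.+1 u =
    west_prob p u s * ends_right pm k u.-1 + (1 - west_prob p u s) * ends_right pm k u.
Proof.
case: u => [|u] us_k.
  by rewrite /= !ends_right_le0 ?mulr0 ?mul0r ?addr0.
case: s us_k => [|s] us_k.
  by rewrite /= !ends_right_ge; [ring | lia ..].
rewrite /west_prob /= p_level // us_k.
by rewrite (_ : u.+1%:Z - 1 = u) //; lia.
Qed.

Lemma meet_origin_ends_right k u s1 l s2 :
  (u <= l)%N -> (u + s1 = k.+1)%N -> (l + s2 = k.+1)%N ->
  meet_origin p k.+1 u s1 l s2 = ends_right pm k l - ends_right pm k u.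
Proof.
elim: k u s1 l s2 => [|k IH] u s1 l s2 + us1 ls2;
  rewrite leq_eqVlt => /orP[/eqP eq_ul | lt_ul]; try solve
    [rewrite -eq_ul in ls2 *; (have <- : s1 = s2 by lia);
     rewrite meet_origin_coincide ?subrr //; lia].
  have [-> [-> [-> ->]]] : (u = 0 /\ s1 = 1 /\ l = 1 /\ s2 = 0)%N by lia.
  by rewrite /= /west_prob /=; ring.
rewrite meet_originS -?mulrA; last by rewrite xpair_eqE ltn_eqF.
set w1 := west_prob p u s1; set w2 := west_prob p l s2.
set Q := ends_right pm k.
transitivity (w1 * (w2 * (Q l.-1 - Q u.-1)) + w1 * ((1 - w2) * (Q l - Q u.-1))
  + (1 - w1) * (w2 * (Q l.-1 - Q u)) + (1 - w1) * ((1 - w2) * (Q l - Q u))).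
  congr (_ + _ + _ + _).
  - by apply: mul_west_probE => u_gt0; congr (_ * _); apply: IH; lia.
  - apply: mul_west_probE => u_gt0; apply: mul_south_probE; first lia.
    by move=> s2_gt0; apply: IH; lia.
  - apply: mul_south_probE; first lia.
    by move=> s1_gt0; congr (_ * _); apply: IH; lia.
  - apply: mul_south_probE; first lia.
    move=> s1_gt0; apply: mul_south_probE; first lia.
    by move=> s2_gt0; apply: IH; lia.
by rewrite (ends_right_west_prob us1) (ends_right_west_prob ls2) -/w1 -/w2 -/Q; ring.
Qed.

End ConstrainedWalks.

Theorem theorem4 (R : realFieldType) (p : nat -> nat -> R) (pm : nat -> R)
    (a b x : nat)
    (hp01 : forall r s : nat, (0 < r)%N -> (0 < s)%N -> 0 <= p r s <= 1)
    (hpm01 : forall m : nat, (2 <= m)%N -> 0 <= pm m <= 1)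
    (hp : forall r s : nat, (0 < r)%N -> (0 < s)%N -> p r s = pm (r + s)%N) :
  Bprob p a b x =
  free_prob pm (a + b + x) (a%:Z) ((b + x + 1)%N%:Z) (end_points x).
Proof.
rewrite /Bprob (_ : (a + b + x + 1)%N = (a + b + x).+1); last lia.
rewrite (@meet_origin_ends_right R p pm hp); try lia.
rewrite (@free_prob_end_points R pm x (a + b + x) a (b + x + 1)%N); last lia.
by have -> : (a + x + 1)%N%:Z = a%:Z + x%:Z + 1 by lia.
Qed.
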